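(* Let $\varphi:G\to T$ be a hyperelliptic morphism of weighted graphs, where $G$ has genus $g$. Then the ramification divisor of $\varphi$ is $$\mathrm{Ram}\,\varphi=\sum_{v\in V(G),\ d_\varphi(v)=2}\big[2g(v)+2-\mathrm{val}_{C_\varphi}(v)\big]\,v .$$ If $G$ and $T$ have no legs, then $\deg\mathrm{Ram}\,\varphi=2g+2$.
   Context: Graphs with legs, weighted graphs, $T_vG$, $\mathrm{val}(v)$, $\chi(v)=2-2g(v)-\mathrm{val}(v)$, and harmonic morphisms $\varphi:G\to T$ with degree function $d_\varphi$ on vertices and half-edges are as usual (a map on vertices and half-edges commuting with root and involution maps, with $d_\varphi(v)=\sum_{h'\in T_vG,\varphi(h')=h}d_\varphi(h')$ for every $h\in T_{\varphi(v)}T$); finite means $d_\varphi>0$ on all half-edges. The ramification degree at $v$ is $\mathrm{Ram}_\varphi(v)=d_\varphi(v)\chi(\varphi(v))-\chi(v)$ and $\mathrm{Ram}\,\varphi=\sum_v\mathrm{Ram}_\varphi(v)v$. A hyperelliptic morphism is a finite harmonic morphism $\varphi:G\to T$ of degree $2$ onto a weighted graph $T$ of genus $0$ such that $d_\varphi(v)=2$ for every vertex $v$ of $G$ with $g(v)>0$. The dilation subgraph $C_\varphi$ consists of the vertices and half-edges of $G$ on which $d_\varphi=2$ (equivalently, of $T$ having exactly one preimage); $\mathrm{val}_{C_\varphi}(v)$ is the number of half-edges rooted at $v$ on which $d_\varphi=2$. *)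

From mathcomp Require Import all_boot all_order all_algebra.
Set Implicit Arguments. Unset Strict Implicit. Unset Printing Implicit Defensive.
Import Order.TTheory GRing.Theory Num.Theory.

(* A weighted graph with legs: finite vertex set, finite half-edge set,
   root map, involution on half-edges (fixed points = legs), vertex genus. *)
Record wgraph := WGraph {
  gV : finType;
  gH : finType;
  groot : gH -> gV;
  giota : gH -> gH;
  giotaK : involutive giota;
  gwt : gV -> nat }.

Section Defs.
Variable G : wgraph.

Definition gadj : rel (gV G) :=
  fun u w => [exists h, (groot h == u) && (groot (giota h) == w)].

Definition gconnected : Prop :=
  0 < #|gV G| /\ forall u w : gV G, connect gadj u w.

Definition legs : {set gH G} := [set h : gH G | giota h == h].
Definition noLegs : Prop := legs = set0.

Definition nedges : nat := #|[set h : gH G | giota h != h]| %/ 2.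

(* genus of a (connected) weighted graph: first Betti number + sum of weights *)
Definition genus : int :=
  (nedges%:Z - #|gV G|%:Z + 1 + (\sum_(v : gV G) gwt v)%:Z)%R.

Definition val (v : gV G) : nat := #|[set h : gH G | groot h == v]|.

Definition chi (v : gV G) : int := (2 - 2 * (gwt v)%:Z - (val v)%:Z)%R.
End Defs.

Section Morph.
Variables (G T : wgraph).
Variables (fV : gV G -> gV T) (fH : gH G -> gH T)
          (dV : gV G -> nat) (dH : gH G -> nat).

Definition harmonic : Prop :=
  [/\ (forall h, fV (groot h) = groot (fH h)),
      (forall h, fH (giota h) = giota (fH h)),
      (forall h, dH (giota h) = dH h) &
      (forall (v : gV G) (h : gH T), groot h = fV v ->
          dV v = \sum_(h' : gH G | (groot h' == v) && (fH h' == h)) dH h')].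

Definition finite_morph : Prop := forall h, 0 < dH h.

Definition has_degree (n : nat) : Prop :=
  forall w : gV T, \sum_(v : gV G | fV v == w) dV v = n.

Definition hyperelliptic : Prop :=
  [/\ harmonic, finite_morph, has_degree 2, genus T = 0%R &
      forall v : gV G, 0 < gwt v -> dV v = 2].

Definition Ram (v : gV G) : int := ((dV v)%:Z * chi (fV v) - chi v)%R.

(* number of half-edges at v in the dilation subgraph C_phi *)
Definition valC (v : gV G) : nat := #|[set h : gH G | (groot h == v) && (dH h == 2)]|.
End Morph.

(* Summing Ram over the vertices, the degree condition pushes the d-weighted
   Euler characteristics of G forward to T, which is Riemann-Hurwitz:
   deg Ram = 2 (2 - 2 g(T)) - (2 - 2 g(G)) when there are no legs.  Every
   connected graph has nonnegative first Betti number, so g(T) = 0 forces all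
   weights of T to vanish.  Locally, harmonicity gives
   sum_{h at v} d(h) = d(v) val(phi v); as d(h) <= d(v) <= 2, the left side is
   val(v) + val_C(v), whence Ram(v) = 2 d(v) - 2 + 2 g(v) - val_C(v).  Vertices
   with d(v) = 1 have weight 0 and no dilated half-edges, and d(v) = 0 is
   impossible in a connected graph. *)

From Pilot Require Import Defs.
From mathcomp Require Import all_boot all_order all_algebra.
From mathcomp Require Import zify.
Set Implicit Arguments. Unset Strict Implicit. Unset Printing Implicit Defensive.
Import Order.TTheory GRing.Theory Num.Theory.
Local Open Scope ring_scope.

Section Involution.
Variables (H : finType) (i : H -> H).
Hypothesis iK : involutive i.

Lemma mem_inv_imset (D : {set H}) h : (h \in i @: D) = (i h \in D).
Proof.
apply/imsetP/idP => [[x xD ->]|hD]; first by rewrite iK.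
by exists (i h); rewrite ?iK.
Qed.

Lemma disjoint_inv_imset (D : {set H}) :
  reflect (forall h, h \in D -> i h \notin D) [disjoint D & i @: D].
Proof.
apply: (iffP pred0P) => [dis h hD|dis h] /=.
  by apply/negP => ihD; have := dis h; rewrite /= hD mem_inv_imset ihD.
by rewrite mem_inv_imset; apply/andP => -[/dis/negP].
Qed.

Lemma card_inv_pairs (D : {set H}) :
  [disjoint D & i @: D] -> (#|D :|: i @: D| = 2 * #|D|)%N.
Proof.
move=> dis; rewrite cardsU (disjoint_setI0 dis) cards0 (card_imset _ (inv_inj iK)).
lia.
Qed.

Lemma leq_card_disjoint_inv (D : {set H}) :
  [disjoint D & i @: D] -> (2 * #|D| <= #|[set h | i h != h]|)%N.
Proof.
move=> /[dup] /disjoint_inv_imset nD dis.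
rewrite -card_inv_pairs //; apply/subset_leq_card/subsetP => h.
rewrite in_setU mem_inv_imset inE; apply: contraTneq => ih.
by rewrite ih orbb; apply/negP => hD; move: (nD h hD); rewrite ih hD.
Qed.

Lemma card_nonfixed :
  #|[set h | i h != h]| = (2 * #|[set h | enum_rank h < enum_rank (i h)]|)%N.
Proof.
set D := [set h | _]; rewrite -card_inv_pairs; last first.
  by apply/disjoint_inv_imset => h; rewrite !inE iK; lia.
apply: eq_card => h; rewrite in_setU mem_inv_imset !inE iK.
rewrite -neq_ltn; apply/idP/idP; apply: contraNneq.
  by move=> /ord_inj/enum_rank_inj E; rewrite -E.
by move=> ->.
Qed.

End Involution.

Section Graph.
Variable G : wgraph.

Lemma nonfixed_noLegs : noLegs G -> [set h : gH G | giota h != h] = setT.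
Proof. by move=> nl; apply/setP => h; have := in_set0 h; rewrite -nl !inE => ->. Qed.

Lemma card_gH_noLegs : noLegs G -> #|gH G| = (2 * nedges G)%N.
Proof.
move=> nl; rewrite /nedges -cardsT -(nonfixed_noLegs nl) (card_nonfixed (@giotaK G)).
by rewrite mulKn.
Qed.

Lemma sum_val : (\sum_(v : gV G) Defs.val v)%N = #|gH G|.
Proof.
rewrite -sum1_card (partition_big (@groot G) predT) //=.
by apply: eq_bigr => v _; rewrite /Defs.val -sum1_card; apply: eq_bigl => h; rewrite inE.
Qed.

Lemma sum_chi : noLegs G -> \sum_(v : gV G) chi v = 2 - 2 * genus G.
Proof.
move=> nl; rewrite /chi /genus !sumrB sumr_const -mulr_sumr.
rewrite -!(big_morph Posz PoszD (erefl 0%:Z)) sum_val card_gH_noLegs //.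
rewrite -[2 *+ _]mulr_natr natz [#|_| in LHS](_ : _ = #|gV G|) //; lia.
Qed.

Definition ball (r : gV G) (n : nat) : {set gV G} :=
  iter n (fun A => A :|: [set u | [exists x in A, gadj u x]]) [set r].

Lemma path_ball r u p : path (@gadj G) u p -> last u p = r -> u \in ball r (size p).
Proof.
elim: p u => [|x p IH] u /=; first by move=> _ ->; rewrite set11.
case/andP=> ux px lx; rewrite in_setU inE; apply/orP; right.
by apply/existsP; exists x; rewrite IH.
Qed.

Lemma ball_boundary r n u : u \in ball r n.+1 -> u \notin ball r n ->
  exists h, groot h = u /\ groot (giota h) \in ball r n.
Proof.
rewrite /= in_setU => /orP[->//|]; rewrite inE => /existsP[x /andP[xn /existsP[h]]].
by case/andP=> /eqP hu /eqP hx _; exists h; rewrite hx.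
Qed.

Lemma connected_descent : gconnected G ->
  exists r (d : gV G -> nat), forall u, u != r ->
    exists h, groot h = u /\ (d (groot (giota h)) < d u)%N.
Proof.
case=> /card_gt0P[r _] conn.
have in_ball u : exists n, u \in ball r n.
  by case/connectP: (conn u r) => p pp lp; exists (size p); apply: path_ball.
exists r, (fun u => ex_minn (in_ball u)) => u ur.
case: ex_minnP => -[|k]; first by rewrite inE (negPf ur).
move=> uk1 kmin; have /ball_boundary: u \notin ball r k by apply/negP => /kmin; rewrite ltnn.
case/(_ uk1) => h [hu hk]; exists h; split=> //.
by case: ex_minnP => m _ /(_ k hk).
Qed.

Lemma card_gV_le_nedges : gconnected G -> (#|gV G| <= (nedges G).+1)%N.
Proof.
move=> /connected_descent[r [d descent]].
(* D holds at most one half-edge of each edge, and its roots cover all vertices but r. *)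
pose D := [set h | (d (groot (giota h)) < d (groot h))%N].
have dis : [disjoint D & (@giota G) @: D].
  by apply/(disjoint_inv_imset (@giotaK G)) => h; rewrite !inE giotaK; lia.
have := leq_card_disjoint_inv (@giotaK G) dis.
have : (#|gV G|.-1 <= #|D|)%N.
  rewrite -(cardsC1 r); apply: leq_trans (leq_imset_card (@groot G) D).
  apply/subset_leq_card/subsetP => u; rewrite !inE => /descent[h [hu hd]].
  by apply/imsetP; exists h; rewrite ?inE ?hu.
rewrite /nedges; lia.
Qed.

Lemma gwt_genus0 : gconnected G -> genus G = 0 -> forall v : gV G, gwt v = 0%N.
Proof.
move=> /card_gV_le_nedges + g0 v; move: g0; rewrite /genus.
have : (gwt v <= \sum_(u : gV G) gwt u)%N by rewrite (bigD1 v) //= leq_addr.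
lia.
Qed.

Lemma connected_single_or_root : gconnected G ->
  forall v : gV G, (forall u, u = v) \/ exists h, groot h = v.
Proof.
case=> _ conn v; case: (pickP (fun u => u != v)) => [u vu|single]; last first.
  by left => u; apply/eqP/negbFE/single.
right; case/connectP: (conn v u) => -[_ /= uv|x p /= /andP[/existsP[h /andP[/eqP hv _]] _] _].
  by rewrite uv eqxx in vu.
by exists h.
Qed.
End Graph.

Section Morphism.
Variables (G T : wgraph) (fV : gV G -> gV T) (fH : gH G -> gH T)
          (dV : gV G -> nat) (dH : gH G -> nat).

Lemma dV_le_degree n v : has_degree fV dV n -> (dV v <= n)%N.
Proof. by move=> deg; rewrite -(deg (fV v)) (bigD1 v) //= leq_addr. Qed.

Lemma sum_Ram n : has_degree fV dV n -> noLegs G -> noLegs T ->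
  \sum_(v : gV G) Ram fV dV v = n%:Z * (2 - 2 * genus T) - (2 - 2 * genus G).
Proof.
move=> deg nlG nlT; rewrite /Ram sumrB -!sum_chi // (partition_big fV predT) //=.
rewrite mulr_sumr; congr (_ - _); apply: eq_bigr => w _.
rewrite -(deg w) (big_morph Posz PoszD (erefl 0%:Z)) mulr_suml.
by apply: eq_bigr => v /eqP ->.
Qed.

Section Harmonic.
Hypothesis harm : harmonic fV fH dV dH.

Lemma sum_dH_root v :
  (\sum_(h | groot h == v) dH h)%N = (dV v * Defs.val (fV v))%N.
Proof.
case: harm => root_fH _ _ balanced.
rewrite (partition_big fH (fun h => groot h == fV v)); last first.
  by move=> h /eqP <-; rewrite root_fH.
rewrite /Defs.val -sum1_card big_distrr /=; apply: eq_big => [h|h]; first by rewrite inE.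
by move=> /eqP/(balanced v) ->; rewrite muln1.
Qed.

Lemma dH_le_dV h : (dH h <= dV (groot h))%N.
Proof.
case: harm => root_fH _ _ balanced; rewrite (balanced (groot h) (fH h)) ?root_fH //.
by rewrite (bigD1 h) ?eqxx //= leq_addr.
Qed.

Lemma dV_gt0 n : gconnected G -> finite_morph dH -> has_degree fV dV n -> (0 < n)%N ->
  forall v, (0 < dV v)%N.
Proof.
move=> cG fin deg n_gt0 v; case: (connected_single_or_root cG v) => [single|[h <-]].
  suff <- : n = dV v by [].
  by rewrite -(deg (fV v)) (big_pred1 v) // => u; rewrite (single u) /= !eqxx.
exact: leq_trans (fin h) (dH_le_dV h).
Qed.

Lemma valC_eq0 v : (dV v <= 1)%N -> valC dH v = 0%N.
Proof.
move=> dv1; apply: eq_card0 => h; rewrite inE; apply/andP => -[/eqP hv /eqP dh2].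
by have := dH_le_dV h; rewrite hv dh2; lia.
Qed.

Lemma sum_dH_root_le2 v : finite_morph dH -> (dV v <= 2)%N ->
  (\sum_(h | groot h == v) dH h)%N = (Defs.val v + valC dH v)%N.
Proof.
move=> fin dv2; rewrite (eq_bigr (fun h => 1 + (dH h == 2))%N); last first.
  move=> h /eqP hv; have := fin h; have := dH_le_dV h; rewrite hv; lia.
rewrite big_split /= sum1_card -big_mkcondr sum1_card /Defs.val /valC.
by congr (_ + _)%N; apply: eq_card => h; rewrite inE.
Qed.

Lemma Ram_le2 v : finite_morph dH -> gwt (fV v) = 0%N -> (dV v <= 2)%N ->
  Ram fV dV v = 2 * (dV v)%:Z - 2 + 2 * (gwt v)%:Z - (valC dH v)%:Z.
Proof.
move=> fin wfv0 dv2; have := sum_dH_root v; rewrite sum_dH_root_le2 // /Ram /chi wfv0.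
lia.
Qed.

End Harmonic.
End Morphism.

Unset Implicit Arguments.

Theorem proposition5p13 (G T : wgraph)
  (fV : gV G -> gV T) (fH : gH G -> gH T)
  (dV : gV G -> nat) (dH : gH G -> nat) :
  gconnected G -> gconnected T ->
  hyperelliptic fV fH dV dH ->
  (forall v : gV G,
     Ram fV dV v =
     (if dV v == 2%N then 2 * (gwt v)%:Z + 2 - (valC dH v)%:Z else 0)%R) /\
  (noLegs G -> noLegs T ->
     (\sum_(v : gV G) Ram fV dV v)%R = (2 * genus G + 2)%R).
Proof.
move=> cG cT [harm fin deg gT wpos]; have wT0 := gwt_genus0 cT gT.
split=> [v|nlG nlT]; last by rewrite (sum_Ram deg nlG nlT) gT; lia.
have dv2 := dV_le_degree v deg; have dv0 := dV_gt0 harm cG fin deg isT v.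
rewrite (Ram_le2 harm) //; case: eqP => [->|dvn2]; first lia.
have dv1 : dV v = 1%N by lia.
have gv0 : gwt v = 0%N by case: (posnP (gwt v)) => // /wpos.
by rewrite (valC_eq0 harm) ?dv1 ?gv0.
Qed.
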